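(* Let $\mathfrak{A}$ be an architecture, $\Sigma$ a finite alphabet and $k\ge1$. There is a deterministic bottom-up tree automaton $\mathcal{A}^{k\text{-stw}}_{\mathsf{edges}}$ with $2^{\mathcal{O}(k|\mathsf{Procs}|)}$ states which accepts all binary trees $\tau$ such that $\tau$ is a $k$-STT and $G_\tau$ satisfies: (1) process edges are not branching (every vertex is the source of at most one and the target of at most one $\to$-edge) and connect events of the same process; (2) data edges are disjoint (two distinct data edges share no endpoint) and respect the Writer/Reader constraints of data structures (a $d$-edge goes from an event of process $\mathsf{Writer}(d)$ to an event of process $\mathsf{Reader}(d)$).
   Context: Architecture $\mathfrak{A}=(\mathsf{Procs},\mathsf{DS},\mathsf{Writer},\mathsf{Reader})$ with finite $\mathsf{Procs}$, finite $\mathsf{DS}$, $\mathsf{Writer},\mathsf{Reader}:\mathsf{DS}\to\mathsf{Procs}$. Edge labels $\Gamma=\{\to\}\cup\mathsf{DS}$, vertex labels in $\Sigma\times\mathsf{Procs}$; the process of a vertex is its second label component. For $k\ge1$, $k$-STTs: $\tau::=(i,a,p)\mid\mathsf{Add}^\gamma_{i,j}\tau\mid\mathsf{Forget}_i\tau\mid\tau\oplus\tau$ ($a\in\Sigma,p\in\mathsf{Procs},\gamma\in\Gamma,i,j\in[k]$), with semantics $[\![\tau]\!]=(G_\tau,\chi_\tau)$: $(i,a,p)$ is a single vertex labelled $(a,p)$ colored $i$; $\mathsf{Add}^\gamma_{i,j}$ adds a $\gamma$-edge from $\chi(i)$ to $\chi(j)$ if both colors are active (nothing otherwise); $\mathsf{Forget}_i$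 deactivates color $i$; $\tau_1\oplus\tau_2$ is the disjoint union, legal only if the active color sets are disjoint. Terms are binary trees over $\{\oplus,(i,a,p),\mathsf{Add}^\gamma_{i,j},\mathsf{Forget}_i\}$. The size of a tree automaton is its number of states. *)

From mathcomp Require Import all_boot.
Set Implicit Arguments. Unset Strict Implicit. Unset Printing Implicit Defensive.

Section STT.
Variables (Procs DS Sigma : finType) (k : nat).

(* Edge labels Gamma = {->} U DS, encoded as option DS:
   None is the process edge label ->, Some d the data-structure label d. *)
Definition elabel : eqType := option DS.
Notation EProc := (@None DS).
Notation EData d := (@Some DS d).

Inductive sym :=
  | SVtx of 'I_k & Sigma & Procs
  | SAdd of elabel & 'I_k & 'I_k
  | SForget of 'I_k
  | SOplus.

Inductive btree :=
  | BLeaf of sym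
  | BUn of sym & btree
  | BBin of sym & btree & btree.

(* Graphs: vertices 0 .. size vlab - 1, with labels in Sigma x Procs;
   edges form a list (multiset) of (source, label, target);
   col i = Some v iff color i is active and chi(i) = v. *)
Record cgraph := CGraph {
  vlab : seq (Sigma * Procs);
  gedges : seq (nat * elabel * nat);
  col : 'I_k -> option nat }.

Definition empty_graph := CGraph [::] [::] (fun _ => None).

Definition shift_edge (n : nat) (e : nat * elabel * nat) :=
  (e.1.1 + n, e.1.2, e.2 + n).

Definition gunion (G1 G2 : cgraph) : cgraph :=
  let n := size (vlab G1) in
  CGraph (vlab G1 ++ vlab G2) (gedges G1 ++ map (shift_edge n) (gedges G2))
    (fun c => if col G1 c is Some v then Some v else omap (addn n) (col G2 c)).

(* Semantics [[tau]] = (G_tau, chi_tau); ill-formed nodes get the empty graph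
   (they are excluded by [is_stt] anyway). *)
Fixpoint sem (t : btree) : cgraph :=
  match t with
  | BLeaf (SVtx i a p) =>
      CGraph [:: (a, p)] [::] (fun c => if c == i then Some 0 else None)
  | BUn (SAdd g i j) t1 =>
      let G := sem t1 in
      match col G i, col G j with
      | Some u, Some v => CGraph (vlab G) (rcons (gedges G) (u, g, v)) (col G)
      | _, _ => G
      end
  | BUn (SForget i) t1 =>
      let G := sem t1 in
      CGraph (vlab G) (gedges G) (fun c => if c == i then None else col G c)
  | BBin SOplus t1 t2 => gunion (sem t1) (sem t2)
  | _ => empty_graph
  end.

Definition active (G : cgraph) (c : 'I_k) : bool := col G c.

Fixpoint is_stt (t : btree) : bool :=
  match t with
  | BLeaf (SVtx _ _ _) => true
  | BUn (SAdd _ _ _) t1 => is_stt t1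
  | BUn (SForget _) t1 => is_stt t1
  | BBin SOplus t1 t2 =>
      [&& is_stt t1, is_stt t2 &
          [forall c, ~~ (active (sem t1) c && active (sem t2) c)]]
  | _ => false
  end.

Definition vproc (G : cgraph) (v : nat) : option Procs :=
  omap snd (onth (vlab G) v).

Definition is_proc (g : elabel) : bool := if g is None then true else false.
Definition is_data (g : elabel) : bool := ~~ is_proc g.

Definition edge_src (e : nat * elabel * nat) := e.1.1.
Definition edge_lab (e : nat * elabel * nat) := e.1.2.
Definition edge_tgt (e : nat * elabel * nat) := e.2.

Variables (Writer Reader : DS -> Procs).

Definition proc_edges_ok (G : cgraph) : Prop :=
  (forall v : nat,
      count (fun e => is_proc (edge_lab e) && (edge_src e == v)) (gedges G) <= 1
   /\ count (fun e => is_proc (edge_lab e) && (edge_tgt e == v)) (gedges G) <= 1)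
  /\ (forall e, e \in gedges G -> is_proc (edge_lab e) ->
        vproc G (edge_src e) = vproc G (edge_tgt e)).

Definition data_edges_ok (G : cgraph) : Prop :=
  (forall (i j : nat) (e1 e2 : nat * elabel * nat),
      onth (gedges G) i = Some e1 -> onth (gedges G) j = Some e2 -> i <> j ->
      is_data (edge_lab e1) -> is_data (edge_lab e2) ->
      forall v, v \in [:: edge_src e1; edge_tgt e1] ->
                v \notin [:: edge_src e2; edge_tgt e2])
  /\ (forall (u v : nat) (d : DS), (u, Some d, v) \in gedges G ->
        vproc G u = Some (Writer d) /\ vproc G v = Some (Reader d)).

Definition graph_ok (G : cgraph) : Prop := proc_edges_ok G /\ data_edges_ok G.

End STT.

Arguments SOplus {Procs DS Sigma k}.

Record dbta (L : Type) := DBTA {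
  dstate : finType;
  delta0 : L -> dstate;
  delta1 : L -> dstate -> dstate;
  delta2 : L -> dstate -> dstate -> dstate;
  dfinal : pred dstate }.

Fixpoint run (Procs DS Sigma : finType) (k : nat)
    (A : dbta (sym Procs DS Sigma k)) (t : btree Procs DS Sigma k) : dstate A :=
  match t with
  | BLeaf a => @delta0 _ A a
  | BUn a t1 => @delta1 _ A a (run A t1)
  | BBin a t1 t2 => @delta2 _ A a (run A t1) (run A t2)
  end.

Definition accepts (Procs DS Sigma : finType) (k : nat)
    (A : dbta (sym Procs DS Sigma k)) (t : btree Procs DS Sigma k) : bool :=
  @dfinal _ A (run A t).

From mathcomp Require Import all_boot zify.
Set Implicit Arguments. Unset Strict Implicit. Unset Printing Implicit Defensive.

(* Both conditions are local: every vertex has at most one outgoing and at most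
   one incoming process edge and at most one incident data edge, and each edge
   agrees with the processes of its endpoints.  Edges are only ever added
   between vertices carrying an active colour, so it suffices to remember, for
   each active colour, the process of its vertex and three bits saying whether
   its outgoing process port, incoming process port and data port are already
   used.  A failed test goes to a rejecting sink; with [|Procs| + 1] possible
   processes this gives [1 + (8 (|Procs| + 1) + 1)^k <= 2^(5 k |Procs|)] states
   (when [Procs] is empty there is no k-STT at all). *)

Lemma has_onthP (T : Type) (p : pred T) (s : seq T) :
  reflect (exists i x, onth s i = Some x /\ p x) (has p s).
Proof.
elim: s => [|z s IH] /=; first by apply: ReflectF => -[i [x []]]; case: i.
case pz : (p z) => /=; first by apply: ReflectT; exists 0, z.
apply: (iffP IH) => [[i [x sx]]|[[|i] [x [/= sx px]]]]; first by exists i.+1, x.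
  by case: sx px pz => -> ->.
by exists i, x.
Qed.

Lemma count_le1P (T : Type) (p : pred T) (s : seq T) :
  reflect (forall i j x y, onth s i = Some x -> onth s j = Some y -> p x -> p y -> i = j)
          (count p s <= 1).
Proof.
elim: s => [|z s IH] /=; first by apply: ReflectT => -[].
have count0P : reflect (forall i x, onth s i = Some x -> ~~ p x) (count p s == 0).
  rewrite -leqn0 leqNgt -has_count; apply: (iffP negP) => [nhas i x sx|all_n].
    by apply/negP => px; apply: nhas; apply/has_onthP; exists i, x.
  by move=> /has_onthP[i [x [/all_n/negP]]].
case pz : (p z) => /=; last first.
  apply: (iffP IH) => [uniq_p [|i] [|j] x y //= sx sy px py|uniq_p].
  - by move: sx px pz => [->] ->.
  - by move: sy py pz => [->] ->.
  - by rewrite (uniq_p i j x y).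
  by move=> i j x y sx sy px py; have [] := uniq_p i.+1 j.+1 x y sx sy px py.
rewrite add1n ltnS leqn0; apply: (iffP count0P) => [nz [|i] [|j] x y //= + + px py|uniq_p].
- by move=> _ /nz; rewrite py.
- by move=> /nz; rewrite px.
- by move=> /nz; rewrite px.
by move=> i x sx; apply/negP => px; have := uniq_p 0 i.+1 z x erefl sx pz px.
Qed.

Lemma le1_add_indicator (a : nat -> nat) (P : pred nat) :
  (forall x, a x + P x <= 1) <-> (forall x, a x <= 1) /\ (forall x, P x -> a x = 0).
Proof.
split=> [le1|[le1 zero] x]; first by split=> x; have := le1 x; case: (P x) => /=; lia.
by case Px: (P x); [rewrite zero | rewrite addn0 le1].
Qed.

Section EdgeAutomaton.
Variables (Procs DS Sigma : finType) (k : nat) (Writer Reader : DS -> Procs).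

Local Notation graph := (cgraph Procs DS Sigma k).
Local Notation edge := (nat * elabel DS * nat)%type.
Local Notation tree := (btree Procs DS Sigma k).
Local Notation Add := (@SAdd Procs DS Sigma k).
Local Notation Forget := (@SForget Procs DS Sigma k).

Definition incident (at_src at_tgt : bool) (v : nat) (e : edge) : bool :=
  (at_src && (edge_src e == v)) || (at_tgt && (edge_tgt e == v)).

Definition degree (lab : pred (elabel DS)) (at_src at_tgt : bool) (g : graph) v :=
  count (fun e => lab (edge_lab e) && incident at_src at_tgt v e) (gedges g).

Local Notation out_deg := (degree (@is_proc DS) true false).
Local Notation in_deg := (degree (@is_proc DS) false true).
(* A data self-loop counts once, as disjointness only concerns distinct edges. *)
Local Notation data_deg := (degree (@is_data DS) true true).

Definition edge_consistent (g : graph) (e : edge) : Prop :=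
  if edge_lab e is Some d then
    vproc g (edge_src e) = Some (Writer d) /\ vproc g (edge_tgt e) = Some (Reader d)
  else vproc g (edge_src e) = vproc g (edge_tgt e).

Definition locally_ok (g : graph) : Prop :=
  [/\ forall v, out_deg g v <= 1, forall v, in_deg g v <= 1,
      forall v, data_deg g v <= 1 & forall e, e \in gedges g -> edge_consistent g e].

Lemma data_disjointE (g : graph) :
  (forall i j (e1 e2 : edge), onth (gedges g) i = Some e1 -> onth (gedges g) j = Some e2 ->
     i <> j -> is_data (edge_lab e1) -> is_data (edge_lab e2) ->
     forall v, v \in [:: edge_src e1; edge_tgt e1] -> v \notin [:: edge_src e2; edge_tgt e2])
  <-> forall v, data_deg g v <= 1.
Proof.
have incidentE v e : incident true true v e = (v \in [:: edge_src e; edge_tgt e]).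
  by rewrite /incident !inE ![v == _]eq_sym.
split=> [disj v|deg_le1 i j e1 e2 ge1 ge2 neq_ij d1 d2 v ve1].
  apply/count_le1P => i j e1 e2 ge1 ge2 /andP[d1 ve1] /andP[d2 ve2].
  case: (eqVneq i j) => // /eqP neq_ij.
  by have := disj i j e1 e2 ge1 ge2 neq_ij d1 d2 v; rewrite -!incidentE ve1 ve2 => /(_ isT).
move/count_le1P: (deg_le1 v) => uniq_v.
apply/negP => ve2; apply: neq_ij; apply: (uniq_v _ _ _ _ ge1 ge2).
  by rewrite d1 incidentE.
by rewrite d2 incidentE.
Qed.

Lemma graph_okE (g : graph) : graph_ok Writer Reader g <-> locally_ok g.
Proof.
rewrite /graph_ok /proc_edges_ok /data_edges_ok data_disjointE.
have outE v : count (fun e => is_proc (edge_lab e) && (edge_src e == v)) (gedges g) = out_deg g v.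
  by apply: eq_count => e; rewrite /incident orbF.
have inE v : count (fun e => is_proc (edge_lab e) && (edge_tgt e == v)) (gedges g) = in_deg g v.
  by [].
split=> [[[deg_le1 proc_ok] [data_le1 wr_ok]]|[out_le1 in_le1 data_le1 cons]].
  split=> // [v|v|[[u [d|]] v] /= uv]; rewrite -?outE -?inE; first by case: (deg_le1 v).
  - by case: (deg_le1 v).
  - exact: wr_ok.
  - exact: proc_ok.
split; split=> //.
- by move=> v; rewrite outE inE.
- by case=> [[u [d|]] v] //= /cons.
- by move=> u v d /cons.
Qed.

Definition well_formed (g : graph) : Prop :=
  [/\ forall e, e \in gedges g -> edge_src e < size (vlab g) /\ edge_tgt e < size (vlab g),
      forall c v, col g c = Some v -> v < size (vlab g)
    & forall c1 c2 v, col g c1 = Some v -> col g c2 = Some v -> c1 = c2].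

Definition vinfo := (option Procs * bool * bool * bool)%type.

Definition vertex_info (g : graph) (v : nat) : vinfo :=
  (vproc g v, 0 < out_deg g v, 0 < in_deg g v, 0 < data_deg g v).

Definition summary (g : graph) : {ffun 'I_k -> option vinfo} :=
  [ffun c => omap (vertex_info g) (col g c)].

Lemma summaryE g c : summary g c = omap (vertex_info g) (col g c).
Proof. exact: ffunE. Qed.

Section Union.
Variables g1 g2 : graph.
Local Notation n := (size (vlab g1)).

Lemma vproc_gunion v :
  vproc (gunion g1 g2) v = if v < n then vproc g1 v else vproc g2 (v - n).
Proof. by rewrite /vproc onth_cat; case: ifP. Qed.

Lemma degree_gunion lab at_src at_tgt v :
  degree lab at_src at_tgt (gunion g1 g2) v =
  degree lab at_src at_tgt g1 v + (if n <= v then degree lab at_src at_tgt g2 (v - n) else 0).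
Proof.
rewrite /degree count_cat count_map; congr (_ + _).
case: leqP => [le_nv|lt_vn]; last first.
  have shifted x : (x + n == v) = false by apply/eqP; lia.
  apply/eqP; rewrite eqn0Ngt -has_count; apply/hasPn => e _.
  by rewrite /incident /= !shifted !andbF.
apply: eq_count => e; rewrite /incident /shift_edge /=.
by rewrite -(subnK le_nv) !eqn_add2r addnK.
Qed.

Hypothesis wf1 : well_formed g1.

Lemma degree_gunion_l lab at_src at_tgt v : v < n ->
  degree lab at_src at_tgt (gunion g1 g2) v = degree lab at_src at_tgt g1 v.
Proof. by rewrite degree_gunion ltnNge => /negbTE ->; rewrite addn0. Qed.

Lemma degree_gunion_r lab at_src at_tgt v :
  degree lab at_src at_tgt (gunion g1 g2) (v + n) = degree lab at_src at_tgt g2 v.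
Proof.
have [edges_in _ _] := wf1.
rewrite degree_gunion leq_addl addnK; apply/eqP; rewrite -[X in _ == X]add0n eqn_add2r.
rewrite eqn0Ngt -has_count; apply/hasPn => e /edges_in[lt_src lt_tgt]; rewrite /incident.
have [-> ->] : (edge_src e == v + n) = false /\ (edge_tgt e == v + n) = false.
  by split; apply/eqP; lia.
by rewrite !andbF.
Qed.

Lemma degree_le1_gunion lab at_src at_tgt :
  (forall v, degree lab at_src at_tgt (gunion g1 g2) v <= 1) <->
  (forall v, degree lab at_src at_tgt g1 v <= 1) /\ (forall v, degree lab at_src at_tgt g2 v <= 1).
Proof.
split=> [deg_le1|[deg1_le1 deg2_le1] v].
  split=> v; last by rewrite -degree_gunion_r.
  by apply: leq_trans (deg_le1 v); rewrite degree_gunion leq_addr.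
case: (ltnP v n) => [lt_vn|le_nv]; first by rewrite degree_gunion_l.
by rewrite -(subnK le_nv) degree_gunion_r.
Qed.

Lemma edge_consistent_gunion_l e : e \in gedges g1 ->
  edge_consistent (gunion g1 g2) e <-> edge_consistent g1 e.
Proof.
have [edges_in _ _] := wf1.
by move=> /edges_in[lt_src lt_tgt]; rewrite /edge_consistent !vproc_gunion lt_src lt_tgt.
Qed.

Lemma edge_consistent_gunion_r e :
  edge_consistent (gunion g1 g2) (shift_edge n e) <-> edge_consistent g2 e.
Proof.
case: e => [[u lab] v]; rewrite /edge_consistent /= !vproc_gunion.
by rewrite !ltnNge !leq_addl !addnK.
Qed.

Lemma locally_ok_gunion : locally_ok (gunion g1 g2) <-> locally_ok g1 /\ locally_ok g2.
Proof.
split=> [[/degree_le1_gunion[out1 out2] /degree_le1_gunion[in1 in2]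
          /degree_le1_gunion[data1 data2] cons]|
         [[out1 in1 data1 cons1] [out2 in2 data2 cons2]]].
  split; split=> // e ge.
    by apply/edge_consistent_gunion_l => //; apply: cons; rewrite mem_cat ge.
  by apply/edge_consistent_gunion_r; apply: cons; rewrite mem_cat map_f ?orbT.
split; try exact/degree_le1_gunion.
move=> e; rewrite mem_cat => /orP[ge|/mapP[e2 ge2 ->]].
  by apply/edge_consistent_gunion_l => //; apply: cons1.
by apply/edge_consistent_gunion_r; apply: cons2.
Qed.

Lemma vertex_info_gunion_l v : v < n -> vertex_info (gunion g1 g2) v = vertex_info g1 v.
Proof. by move=> lt_vn; rewrite /vertex_info vproc_gunion lt_vn !degree_gunion_l. Qed.

Lemma vertex_info_gunion_r v : vertex_info (gunion g1 g2) (v + n) = vertex_info g2 v.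
Proof.
by rewrite /vertex_info vproc_gunion ltnNge leq_addl addnK !degree_gunion_r.
Qed.

Lemma summary_gunion :
  summary (gunion g1 g2) = [ffun c => if summary g1 c is Some x then Some x else summary g2 c].
Proof.
have [_ cols_in _] := wf1.
apply/ffunP => c; rewrite !ffunE /=.
case col1 : (col g1 c) => [v|] /=; first by rewrite vertex_info_gunion_l // (cols_in c).
by case: (col g2 c) => //= w; rewrite addnC vertex_info_gunion_r.
Qed.

Lemma well_formed_gunion : well_formed g2 -> well_formed (gunion g1 g2).
Proof.
have [edges1 cols1 inj1] := wf1; case=> edges2 cols2 inj2.
rewrite /well_formed /= size_cat; split.
- move=> e; rewrite mem_cat => /orP[/edges1|/mapP[e2 /edges2 + ->]];
    rewrite /edge_src /edge_tgt /=; lia.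
- move=> c v; case col1 : (col g1 c) => [w|] /=.
    by move=> [<-]; have := cols1 _ _ col1; lia.
  by case col2 : (col g2 c) => [w|] //= [<-]; have := cols2 _ _ col2; lia.
- move=> c1 c2 v.
  case col11 : (col g1 c1) => [w1|]; case col12 : (col g1 c2) => [w2|] /=.
  + by move=> [<-] [w12]; rewrite w12 in col12; exact: inj1 col11 col12.
  + by case: (col g2 c2) => [w|] //= [<-] [w1E]; have := cols1 _ _ col11; lia.
  + by case: (col g2 c1) => [w|] //= [vE] [w2E]; have := cols1 _ _ col12; lia.
  + case col21 : (col g2 c1) => [w1|] //=; case col22 : (col g2 c2) => [w2|] //= [<-].
    by move=> [/addnI w21]; rewrite w21 in col22; exact: inj2 col21 col22.
Qed.

End Union.

Definition add_edge (g : graph) (e : edge) : graph :=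
  CGraph (vlab g) (rcons (gedges g) e) (col g).

Lemma degree_add_edge lab at_src at_tgt g e x :
  degree lab at_src at_tgt (add_edge g e) x =
  degree lab at_src at_tgt g x + (lab (edge_lab e) && incident at_src at_tgt x e).
Proof. by rewrite /degree /= -cats1 count_cat /= addn0. Qed.

Definition can_add (lab : elabel DS) (x y : vinfo) : bool :=
  let: (p, out, _, data) := x in
  let: (q, _, inn, data') := y in
  if lab is Some d then [&& ~~ data, ~~ data', p == Some (Writer d) & q == Some (Reader d)]
  else [&& ~~ out, ~~ inn & p == q].

Definition mark (lab : elabel DS) (at_src at_tgt : bool) (x : vinfo) : vinfo :=
  let: (p, out, inn, data) := x in
  (p, out || is_proc lab && at_src, inn || is_proc lab && at_tgt,
   data || is_data lab && (at_src || at_tgt)).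

Lemma vertex_info_add_edge g u lab v x :
  vertex_info (add_edge g (u, lab, v)) x = mark lab (u == x) (v == x) (vertex_info g x).
Proof. by rewrite /vertex_info !degree_add_edge /incident /= !addn_gt0 !lt0b !orbF. Qed.

Lemma degree_le1_add_edge lab at_src at_tgt g e :
  (forall x, degree lab at_src at_tgt (add_edge g e) x <= 1) <->
  (forall x, degree lab at_src at_tgt g x <= 1) /\
  (forall x, lab (edge_lab e) && incident at_src at_tgt x e -> degree lab at_src at_tgt g x = 0).
Proof.
rewrite -(le1_add_indicator _ (fun x => lab (edge_lab e) && incident at_src at_tgt x e)).
by split=> le1 x; have := le1 x; rewrite degree_add_edge.
Qed.

Lemma locally_ok_add_edge g u lab v :
  locally_ok (add_edge g (u, lab, v)) <->
  locally_ok g /\ can_add lab (vertex_info g u) (vertex_info g v).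
Proof.
have consE : (forall e, e \in gedges (add_edge g (u, lab, v)) -> edge_consistent g e) <->
             (forall e, e \in gedges g -> edge_consistent g e) /\ edge_consistent g (u, lab, v).
  split=> [cons|[cons cons_uv] e]; last by rewrite mem_rcons inE => /predU1P[->|/cons].
  by split=> [e ge|]; apply: cons; rewrite mem_rcons inE ?ge ?orbT ?eqxx.
rewrite /locally_ok /can_add /vertex_info /incident /=.
case: lab consE => [d|] consE.
- split=> [[/degree_le1_add_edge[out _] /degree_le1_add_edge[inn _]
            /degree_le1_add_edge[data data0] /consE[cons [wr rd]]]|].
    have [du dv] : data_deg g u = 0 /\ data_deg g v = 0.
      by split; apply: data0; rewrite /incident /= eqxx ?orbT.
    by rewrite du dv wr rd !eqxx.
  move=> [[out inn data cons]]; rewrite -!eqn0Ngt => /and4P[/eqP du /eqP dv /eqP wr /eqP rd].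
  split; try by apply/degree_le1_add_edge.
    apply/degree_le1_add_edge; split=> // x.
    by rewrite /incident /edge_src /edge_tgt /= => /orP[] /eqP <-.
  exact/consE.
split=> [[/degree_le1_add_edge[out out0] /degree_le1_add_edge[inn in0]
          /degree_le1_add_edge[data _] /consE[cons uv]]|].
  have [du dv] : out_deg g u = 0 /\ in_deg g v = 0.
    by split; [apply: out0 | apply: in0]; rewrite /incident /= eqxx.
  by rewrite du dv uv !eqxx.
move=> [[out inn data cons]]; rewrite -!eqn0Ngt => /and3P[/eqP du /eqP dv /eqP uv].
split; try by apply/degree_le1_add_edge.
- apply/degree_le1_add_edge; split=> // x.
  by rewrite /incident /edge_src /= orbF => /eqP <-.
- apply/degree_le1_add_edge; split=> // x.
  by rewrite /incident /edge_tgt /= => /eqP <-.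
- exact/consE.
Qed.

Definition add_summary (lab : elabel DS) (i j : 'I_k) (s : {ffun 'I_k -> option vinfo}) :=
  [ffun c => omap (mark lab (c == i) (c == j)) (s c)].

(* Colours are injective, so the vertex of colour [c] is an endpoint of the new
   edge exactly when [c] is [i] or [j]. *)
Lemma summary_add_edge g lab i j u v :
  well_formed g -> col g i = Some u -> col g j = Some v ->
  summary (add_edge g (u, lab, v)) = add_summary lab i j (summary g).
Proof.
case=> _ _ col_inj col_i col_j; apply/ffunP => c; rewrite !ffunE /=.
case col_c : (col g c) => [w|] //=; rewrite vertex_info_add_edge.
have eq_colE x y : col g x = Some y -> (y == w) = (x == c).
  by move=> col_x; apply/eqP/eqP => [yw|xc]; [apply: col_inj col_x _; rewrite yw | congruence].
by rewrite (eq_colE _ _ col_i) (eq_colE _ _ col_j) ![_ == c]eq_sym.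
Qed.

Lemma well_formed_add_edge g u lab v :
  well_formed g -> u < size (vlab g) -> v < size (vlab g) -> well_formed (add_edge g (u, lab, v)).
Proof.
case=> edges_in cols_in col_inj lt_u lt_v; split=> // e.
by rewrite mem_rcons inE => /predU1P[->|/edges_in].
Qed.

Definition forget_color (g : graph) (i : 'I_k) : graph :=
  CGraph (vlab g) (gedges g) (fun c => if c == i then None else col g c).

Lemma summary_forget_color g i :
  summary (forget_color g i) = [ffun c => if c == i then None else summary g c].
Proof. by apply/ffunP => c; rewrite !ffunE /=; case: (c == i). Qed.

Lemma well_formed_forget_color g i : well_formed g -> well_formed (forget_color g i).
Proof.
case=> edges_in cols_in col_inj; split=> //= [c|c1 c2] v; first by case: (c == i) => // /cols_in.
by case: (c1 == i) => //; case: (c2 == i) => //; apply: col_inj.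
Qed.

Lemma sem_add lab i j (t : tree) :
  sem (BUn (Add lab i j) t) =
  if (col (sem t) i, col (sem t) j) is (Some u, Some v) then add_edge (sem t) (u, lab, v)
  else sem t.
Proof. by rewrite /=; case: (col (sem t) i) => [u|]; case: (col (sem t) j). Qed.

Lemma sem_forget i (t : tree) : sem (BUn (Forget i) t) = forget_color (sem t) i.
Proof. by []. Qed.

Lemma well_formed_sem (t : tree) : is_stt t -> well_formed (sem t).
Proof.
elim: t => [a|a t IH|a t1 IH1 t2 IH2]; case: a => //.
- move=> i a p _; split=> //= [c|c1 c2] v; first by case: (c == i) => // -[<-].
  by case: eqP => // -> _; case: eqP.
- move=> lab i j /IH wf_t; rewrite sem_add.
  case col_i : (col (sem t) i) => [u|] //; case col_j : (col (sem t) j) => [v|] //.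
  have [_ cols_in _] := wf_t.
  by apply: well_formed_add_edge; [|exact: cols_in col_i|exact: cols_in col_j].
- by move=> i /IH wf_t; apply: well_formed_forget_color.
- by case/and3P => /IH1 wf1 /IH2 wf2 _; apply: well_formed_gunion.
Qed.

Definition state := option {ffun 'I_k -> option vinfo}.

Definition edges_delta0 (a : sym Procs DS Sigma k) : state :=
  if a is SVtx i _ p then
    Some [ffun c => if c == i then Some (Some p, false, false, false) else None]
  else None.

Definition edges_delta1 (a : sym Procs DS Sigma k) (q : state) : state :=
  match a, q with
  | SAdd lab i j, Some s =>
      if (s i, s j) is (Some x, Some y) then
        if can_add lab x y then Some (add_summary lab i j s) else None
      else Some s
  | SForget i, Some s => Some [ffun c => if c == i then None else s c]
  | _, _ => None
  end.

Definition edges_delta2 (a : sym Procs DS Sigma k) (q1 q2 : state) : state :=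
  match a, q1, q2 with
  | SOplus, Some s1, Some s2 =>
      if [forall c, ~~ (s1 c && s2 c)] then
        Some [ffun c => if s1 c is Some x then Some x else s2 c]
      else None
  | _, _, _ => None
  end.

Definition edges_automaton : dbta (sym Procs DS Sigma k) :=
  DBTA edges_delta0 edges_delta1 edges_delta2 (fun q : state => q).

Definition run_invariant (t : tree) (q : state) : Prop :=
  if q is Some s then [/\ s = summary (sem t), is_stt t & locally_ok (sem t)]
  else ~ (is_stt t /\ locally_ok (sem t)).

Lemma run_invariant_leaf a : run_invariant (BLeaf a) (edges_delta0 a).
Proof.
case: a => [i x p|lab i j []|i []|[]] //.
split=> //; first by apply/ffunP => c; rewrite !ffunE /=; case: (c == i).
Qed.

Lemma run_invariant_add lab i j t q :
  run_invariant t q -> run_invariant (BUn (Add lab i j) t) (edges_delta1 (Add lab i j) q).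
Proof.
rewrite /run_invariant sem_add.
case: q => [s [-> stt_t ok_t]|not_ok] /=; last first.
  case: (col (sem t) i) => [u|]; case: (col (sem t) j) => [v|] //.
  by case=> stt_t /locally_ok_add_edge[ok_t _]; apply: not_ok.
have wf_t := well_formed_sem stt_t; rewrite !summaryE.
case col_i : (col (sem t) i) => [u|]; case col_j : (col (sem t) j) => [v|] //=.
have := locally_ok_add_edge (sem t) u lab v.
case: ifP => [can|cannot] okE; last by case=> _ /okE[_]; rewrite /= cannot.
by split; [rewrite (summary_add_edge _ wf_t col_i col_j) | | apply/okE].
Qed.

Lemma run_invariant_forget i t q :
  run_invariant t q -> run_invariant (BUn (Forget i) t) (edges_delta1 (Forget i) q).
Proof.
rewrite /run_invariant sem_forget.
by case: q => [s [-> stt_t ok_t]|not_ok] //=; rewrite summary_forget_color.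
Qed.

Lemma active_summary (g : graph) c : summary g c = active g c :> bool.
Proof. by rewrite ffunE /active; case: (col g c). Qed.

Lemma run_invariant_oplus t1 t2 q1 q2 :
  run_invariant t1 q1 -> run_invariant t2 q2 ->
  run_invariant (BBin SOplus t1 t2) (edges_delta2 SOplus q1 q2).
Proof.
rewrite /run_invariant /=.
case: q1 => [s1 [-> stt1 ok1]|not_ok1]; last first.
  case: q2 => [?|] _ [/and3P[stt1 _ _] /(locally_ok_gunion _ (well_formed_sem stt1))[ok1 _]];
    by apply: not_ok1.
case: q2 => [s2 [-> stt2 ok2]|not_ok2]; last first.
  case=> /and3P[_ stt2 _] /(locally_ok_gunion _ (well_formed_sem stt1))[_ ok2].
  by apply: not_ok2.
have wf1 := well_formed_sem stt1.
have -> : [forall c, ~~ (summary (sem t1) c && summary (sem t2) c)] =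
          [forall c, ~~ (active (sem t1) c && active (sem t2) c)].
  by apply: eq_forallb => c; rewrite !active_summary.
rewrite stt1 stt2; case: ifP => [disj|_ []//].
by split=> //; [rewrite summary_gunion | apply/locally_ok_gunion].
Qed.

Lemma run_edges_automaton (t : tree) : run_invariant t (run edges_automaton t).
Proof.
elim: t => [a|a t IH|a t1 IH1 t2 IH2] /=; first exact: run_invariant_leaf.
  case: a => [i x p|lab i j|i|] /=; try by case: (run _ t) IH => [?|] _ [].
  - exact: run_invariant_add.
  - exact: run_invariant_forget.
case: a => [i x p|lab i j|i|]; try by case: (run _ t1) IH1 => [?|] _ [].
exact: run_invariant_oplus.
Qed.

Lemma edges_automaton_accepts (t : tree) :
  accepts edges_automaton t <-> is_stt t /\ graph_ok Writer Reader (sem t).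
Proof.
rewrite /accepts graph_okE; have := run_edges_automaton t.
by case: (run _ t) => [s [_ stt_t ok_t]|not_ok].
Qed.

Lemma card_edges_automaton :
  #|dstate edges_automaton| = ((8 * #|Procs|.+1).+1 ^ k).+1.
Proof.
by rewrite /= card_option card_ffun card_option !card_prod card_option !card_bool card_ord
  -!mulnA mulnC.
Qed.

End EdgeAutomaton.

Lemma state_count_bound p k : 0 < p -> 0 < k -> ((8 * p.+1).+1 ^ k).+1 <= 2 ^ (5 * (k * p)).
Proof.
move=> p_gt0 k_gt0; apply: leq_trans (_ : (8 * p + 10) ^ k <= _).
  by rewrite ltn_exp2r // mulnS; lia.
have linear_le_exp q : 0 < q -> 8 * q + 10 <= 2 ^ (5 * q).
  elim: q => // -[_|q IH] _ //; rewrite (mulnS 5) expnD.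
  have := IH isT; have : 0 < 2 ^ (5 * q.+1) by rewrite expn_gt0.
  lia.
have -> : 5 * (k * p) = 5 * p * k by rewrite mulnCA mulnC.
by rewrite expnM leq_exp2r // linear_le_exp.
Qed.

Lemma stt_card_procs_gt0 (Procs DS Sigma : finType) (k : nat) (t : btree Procs DS Sigma k) :
  is_stt t -> 0 < #|Procs|.
Proof.
elim: t => [[] // _ _ p _|[] //= *|[] //= t1 IH1 t2 _ /and3P[/IH1]] //.
by apply/card_gt0P; exists p.
Qed.

Definition reject_all (L : Type) : dbta L :=
  DBTA (fun _ => tt) (fun _ _ => tt) (fun _ _ _ => tt) (fun _ => false).

Theorem mainTheorem10 :
  exists c : nat,
  forall (Procs DS Sigma : finType) (Writer Reader : DS -> Procs) (k : nat),
    1 <= k ->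
    exists A : dbta (sym Procs DS Sigma k),
      #|dstate A| <= 2 ^ (c * (k * #|Procs|)) /\
      forall t : btree Procs DS Sigma k,
        accepts A t <-> (is_stt t /\ graph_ok Writer Reader (sem t)).
Proof.
exists 5 => Procs DS Sigma Writer Reader k k_gt0.
have [procs_empty|procs_gt0] := posnP #|Procs|.
  exists (reject_all _); split=> [|t]; first by rewrite card_unit expn_gt0.
  by split=> // -[/stt_card_procs_gt0]; rewrite procs_empty.
exists (@edges_automaton Procs DS Sigma k Writer Reader).
split; last exact: edges_automaton_accepts.
by rewrite card_edges_automaton state_count_bound.
Qed.
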